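(* Let $P,L\in K\langle\partial_t\rangle$ be monic, with $P\in k(t)[\mathbf x,1/r]\langle\partial_t\rangle$ for some nonzero $r\in k[\mathbf x,t]$ and $L\in k(t)\langle\partial_t\rangle$. Let $\mathbf c\in k^n$ with $r(\mathbf c,t)\neq 0$. (1) If ${\rm gcrd}(P_{\mathbf x=\mathbf c},L)=1$, then ${\rm gcrd}(P,L)=1$. (2) If ${\rm gcrd}(P,L)=1$, then there exists $\mathbf a\in k^n$ with $r(\mathbf a,t)\neq 0$ and ${\rm gcrd}(P_{\mathbf x=\mathbf a},L)=1$.
   Context: $k$ is an algebraically closed field of characteristic zero, $\mathbf x=(x_1,\dots,x_n)$, $K=k(t,x_1,\dots,x_n)$, and $K\langle\partial_t\rangle$ is the ring of linear differential operators in $\partial_t=\partial/\partial t$ with coefficients in $K$; $k(t)[\mathbf x,1/r]\langle\partial_t\rangle$ denotes those operators whose coefficients lie in the subring $k(t)[\mathbf x,1/r]$ of $K$. For such an operator $P$ and $\mathbf c\in k^n$ with $r(\mathbf c,t)\neq0$, $P_{\mathbf x=\mathbf c}\in k(t)\langle\partial_t\rangle$ denotes the operator obtained by substituting $x_i=c_i$ in all coefficients. ${\rm gcrd}(P,L)$ denotes the monic greatest common right divisor of $P$ and $L$ in $K\langle\partial_t\rangle$. *)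

From HB Require Import structures.
From mathcomp Require Import all_boot all_order all_algebra.
From mathcomp Require Import fraction generic_quotient mpoly.
Set Implicit Arguments. Unset Strict Implicit. Unset Printing Implicit Defensive.
Import GRing.Theory.
Local Open Scope ring_scope.
Local Notation "x %:F" := (@FracField.tofrac _ x).

(* An operator sum_i a_i D^i over a field F with derivation delta is stored as the *)
(* coefficient polynomial  sum_i a_i 'X^i : {poly F}  (coefficients on the left).  *)
Section DiffOp.
Variable F : fieldType.
Variable delta : F -> F.

(* D * Q  = sum_j (q_j D^(j+1) + delta(q_j) D^j) *)
Definition dX (Q : {poly F}) : {poly F} := 'X * Q + map_poly delta Q.

(* noncommutative product P * Q = sum_i p_i (D^i * Q) *)
Definition dmul (P Q : {poly F}) : {poly F} :=
  \sum_(i < size P) P`_i *: iter i dX Q.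

Definition rdvd (Q P : {poly F}) : Prop := exists A : {poly F}, P = dmul A Q.

Definition gcrd_one (P L : {poly F}) : Prop :=
  forall Q : {poly F}, rdvd Q P -> rdvd Q L -> (size Q <= 1)%N.
End DiffOp.

Definition fder (R : idomainType) (f : {fraction {poly R}}) : {fraction {poly R}} :=
  let p := repr f in
  ((deriv (p.1) * p.2 - p.1 * deriv (p.2))%:F) / ((p.2 ^+ 2)%:F).

Section Fields.
Variables (k : fieldType) (n : nat).

(* k[x][t] (t is the polynomial variable), k(t), K = k(t, x) *)
Definition kxt := {poly {mpoly k[n]}}.
Definition kt := {fraction {poly k}}.
Definition bigK := {fraction {poly {mpoly k[n]}}}.

Definition liftkt (q : {poly k}) : {poly {mpoly k[n]}} :=
  map_poly (fun a : k => a%:MP_[n]) q.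

Definition kt_to_K (f : {fraction {poly k}}) : {fraction {poly {mpoly k[n]}}} :=
  let p := repr f in (liftkt p.1)%:F / (liftkt p.2)%:F.

Definition evalx (c : 'I_n -> k) (p : {poly {mpoly k[n]}}) : {poly k} :=
  map_poly (fun m : {mpoly k[n]} => m.@[c]) p.

(* An element of k(t)[x, 1/r] is written p / (r^m q(t)) with p in k[x][t],
   m in nat, q in k[t] nonzero; such a datum is a triple ((p, m), q). *)
Definition coefK (r : {poly {mpoly k[n]}}) (e : {poly {mpoly k[n]}} * nat * {poly k})
  : {fraction {poly {mpoly k[n]}}} :=
  (e.1.1)%:F / ((r ^+ e.1.2 * liftkt e.2)%:F).

Definition coefKt (r : {poly {mpoly k[n]}}) (c : 'I_n -> k)
  (e : {poly {mpoly k[n]}} * nat * {poly k}) : {fraction {poly k}} :=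
  (evalx c e.1.1)%:F / ((evalx c r ^+ e.1.2 * e.2)%:F).

(* the operator P = sum_i s_i D^i in k(t)[x,1/r]<D> and its specialization P_{x=c} *)
Definition opK r (s : seq ({poly {mpoly k[n]}} * nat * {poly k}))
  : {poly {fraction {poly {mpoly k[n]}}}} := Poly (map (coefK r) s).
Definition opKt r c (s : seq ({poly {mpoly k[n]}} * nat * {poly k}))
  : {poly {fraction {poly k}}} := Poly (map (coefKt r c) s).
End Fields.

From Pilot Require Import Defs.
From HB Require Import structures.
From mathcomp Require Import all_boot all_order all_algebra.
From mathcomp Require Import fraction generic_quotient mpoly zify ring.

(* Both statements are read off one determinant.  For monic P of order m and L of
   order l, gcrd(P, L) = 1 iff the differential Sylvester matrix, whose rows are the
   coefficient vectors of D^i P (i < l) and D^j L (j < m), is invertible: a kernel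
   vector is a relation U P + V L = 0 with ord U < l and ord V < m, and such a relation
   exists iff P and L have a nontrivial common right divisor (Euclidean descent one
   way, a left common multiple of the cofactors the other way).  The entries of this
   matrix over K lie in k(t)[x, 1/r], and substituting x = c commutes with sums,
   products and d/dt, so the determinant over K specializes to the one over k(t).
   Hence (1); for (2) write the determinant over K as p / (r^e q) with p <> 0 and pick
   a point where r p does not vanish, which exists since k is infinite. *)

Set Implicit Arguments. Unset Strict Implicit. Unset Printing Implicit Defensive.
Import GRing.Theory.
Local Open Scope ring_scope.
Local Open Scope quotient_scope.
Local Notation "x %:F" := (@FracField.tofrac _ x).
(* [coefK] of poly.v shadows the coefficient map of Defs. *)
Local Notation coefK := Defs.coefK.

Lemma size_sub_lead_lt (R : nzRingType) (p q : {poly R}) :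
  p != 0 -> size p = size q -> lead_coef p = lead_coef q ->
  (size (p - q)%R < size p)%N.
Proof.
move=> p0 spq lpq; have sp_gt0 : (0 < size p)%N by rewrite size_poly_gt0.
rewrite -(prednK sp_gt0) ltnS; apply/leq_sizeP => j ltj; rewrite coefB.
have [->|ne] := eqVneq j (size p).-1.
  by rewrite -lead_coefE spq -lead_coefE lpq subrr.
have : ((size p).-1 < j)%N by rewrite ltn_neqAle eq_sym ne ltj.
rewrite (prednK sp_gt0) => {}ltj.
by rewrite !nth_default ?subrr // -spq.
Qed.

Section OreAlgebra.
Variables (F : fieldType) (delta : F -> F).
Hypothesis deltaD : {morph delta : x y / x + y}.
Hypothesis deltaM : forall x y, delta (x * y) = delta x * y + x * delta y.

Local Notation dX := (dX delta).
Local Notation dmul := (dmul delta).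
Implicit Types (p q A B P Q L R U V : {poly F}).

Lemma delta0 : delta 0 = 0.
Proof. by apply: (addrI (delta 0)); rewrite -deltaD !addr0. Qed.

Lemma size_map_delta Q : (size (map_poly delta Q) <= size Q)%N.
Proof. by apply/leq_sizeP => j le_j; rewrite coef_map_id0 ?delta0 // nth_default // delta0. Qed.

Lemma coef_dX Q i : (dX Q)`_i = (if i == 0%N then 0 else Q`_i.-1) + delta Q`_i.
Proof. by rewrite coefD coefXM coef_map_id0 ?delta0. Qed.

Lemma dX0 : dX 0 = 0.
Proof. by rewrite /Defs.dX mulr0 map_poly0 addr0. Qed.

Lemma dXD : {morph dX : P Q / P + Q}.
Proof.
move=> P Q; apply/polyP=> i; rewrite coefD !coef_dX !coefD deltaD.
by case: (i == 0%N); rewrite ?addr0 ?add0r // addrACA.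
Qed.

Lemma dXZ a Q : dX (a *: Q) = a *: dX Q + delta a *: Q.
Proof.
apply/polyP=> i; rewrite coef_dX coefD !coefZ coef_dX deltaM.
case: (i == 0%N); rewrite ?mulr0 ?add0r ?coefZ; first by rewrite addrC.
by rewrite mulrDr -addrA (addrC (delta a * _)).
Qed.

Lemma size_dX_le Q : (size (dX Q) <= (size Q).+1)%N.
Proof.
apply: leq_trans (size_polyD _ _) _; rewrite geq_max; apply/andP; split.
  by apply: leq_trans (size_polyMleq _ _) _; rewrite size_polyX.
exact: leq_trans (size_map_delta Q) _.
Qed.

Lemma size_dX Q : Q != 0 -> size (dX Q) = (size Q).+1.
Proof.
move=> Q0; rewrite /Defs.dX mulrC size_polyDl size_mulX //.
by rewrite ltnS size_map_delta.
Qed.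

Lemma lead_coef_dX Q : Q != 0 -> lead_coef (dX Q) = lead_coef Q.
Proof.
move=> Q0; rewrite /Defs.dX mulrC lead_coefDl ?lead_coefMX //.
by rewrite size_mulX // ltnS size_map_delta.
Qed.

Lemma iter_dXD i : {morph iter i dX : P Q / P + Q}.
Proof. by move=> P Q; elim: i => //= i ->; rewrite dXD. Qed.

Lemma size_iter_dX_le i Q : (size (iter i dX Q) <= size Q + i)%N.
Proof.
elim: i => [|i IH] /=; first by rewrite addn0.
by apply: leq_trans (size_dX_le _) _; rewrite addnS ltnS.
Qed.

Lemma size_iter_dX i Q : Q != 0 -> size (iter i dX Q) = (size Q + i)%N.
Proof.
move=> Q0; elim: i => [|i IH] /=; first by rewrite addn0.
by rewrite size_dX ?IH ?addnS // -size_poly_gt0 IH addn_gt0 size_poly_gt0 Q0.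
Qed.

Lemma lead_coef_iter_dX i Q : Q != 0 -> lead_coef (iter i dX Q) = lead_coef Q.
Proof.
move=> Q0; elim: i => //= i IH.
by rewrite lead_coef_dX // -size_poly_gt0 size_iter_dX // addn_gt0 size_poly_gt0 Q0.
Qed.

Lemma dmulE N A Q : (size A <= N)%N ->
  dmul A Q = \sum_(i < N) A`_i *: iter i dX Q.
Proof.
move=> le_AN; rewrite /Defs.dmul (big_ord_widen N (fun i => A`_i *: iter i dX Q)) //.
rewrite big_mkcond; apply: eq_bigr => i _; case: ltnP => // le_Ai.
by rewrite nth_default // scale0r.
Qed.

Lemma dmul0l Q : dmul 0 Q = 0.
Proof. by rewrite /Defs.dmul size_poly0 big_ord0. Qed.

Lemma dmulDl Q : {morph dmul^~ Q : A B / A + B}.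
Proof.
move=> A B; pose N := maxn (size A) (size B).
rewrite (dmulE _ (size_polyD A B)) (@dmulE N A) ?leq_maxl // (@dmulE N B) ?leq_maxr //.
by rewrite -big_split; apply: eq_bigr => i _; rewrite coefD scalerDl.
Qed.

Lemma dmulZl a A Q : dmul (a *: A) Q = a *: dmul A Q.
Proof.
rewrite (dmulE _ (size_scale_leq a A)) /Defs.dmul scaler_sumr.
by apply: eq_bigr => i _; rewrite coefZ scalerA.
Qed.

Lemma dmul_suml (I : Type) (r : seq I) (p : pred I) (G : I -> {poly F}) Q :
  dmul (\sum_(i <- r | p i) G i) Q = \sum_(i <- r | p i) dmul (G i) Q.
Proof. exact: (big_morph (dmul^~ Q) (dmulDl Q) (dmul0l Q)). Qed.

Lemma dmulDr A : {morph dmul A : P Q / P + Q}.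
Proof.
move=> P Q; rewrite /Defs.dmul -big_split.
by apply: eq_bigr => i _; rewrite iter_dXD scalerDr.
Qed.

Lemma dmulZXn a i Q : dmul (a *: 'X^i) Q = a *: iter i dX Q.
Proof.
have le_aXi : (size (a *: 'X^i : {poly F}) <= i.+1)%N.
  by apply: leq_trans (size_scale_leq _ _) _; rewrite size_polyXn.
rewrite (dmulE _ le_aXi) big_ord_recr /= big1 ?add0r.
  by rewrite coefZ coefXn eqxx mulr1.
by move=> j _; rewrite coefZ coefXn (ltn_eqF (ltn_ord j)) mulr0 scale0r.
Qed.

Lemma dmul1l Q : dmul 1 Q = Q.
Proof. by rewrite -(scale1r 1) -(expr0 'X) dmulZXn scale1r. Qed.

Lemma dmul_dX A Q : dmul (dX A) Q = dX (dmul A Q).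
Proof.
rewrite {1}/Defs.dX dmulDl.
have -> : dmul ('X * A) Q = \sum_(i < size A) A`_i *: iter i.+1 dX Q.
  have le_XA : (size ('X * A)%R <= (size A).+1)%N.
    by apply: leq_trans (size_polyMleq _ _) _; rewrite size_polyX.
  rewrite (dmulE _ le_XA) big_ord_recl /= coefXM eqxx scale0r add0r.
  by apply: eq_bigr => i _; rewrite coefXM.
have -> : dmul (map_poly delta A) Q = \sum_(i < size A) delta A`_i *: iter i dX Q.
  rewrite (dmulE _ (size_map_delta A)).
  by apply: eq_bigr => i _; rewrite coef_map_id0 ?delta0.
rewrite /Defs.dmul (big_morph dX dXD dX0) -big_split.
by apply: eq_bigr => i _; rewrite dXZ.
Qed.

Lemma dmul_iter_dX i A Q : dmul (iter i dX A) Q = iter i dX (dmul A Q).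
Proof. by elim: i => //= i <-; rewrite dmul_dX. Qed.

Lemma dmulA A B Q : dmul (dmul A B) Q = dmul A (dmul B Q).
Proof.
rewrite [dmul A B]/Defs.dmul dmul_suml [RHS]/Defs.dmul.
by apply: eq_bigr => i _; rewrite dmulZl dmul_iter_dX.
Qed.

Lemma size_dmul_le A Q : (size (dmul A Q) <= (size A + size Q).-1)%N.
Proof.
rewrite /Defs.dmul; apply: (big_ind (fun p => size p <= (size A + size Q).-1)%N).
- by rewrite size_poly0.
- by move=> p q lep leq; apply: leq_trans (size_polyD _ _) _; rewrite geq_max lep leq.
move=> i _; apply: leq_trans (size_scale_leq _ _) _.
by apply: leq_trans (size_iter_dX_le _ _) _; have := ltn_ord i; lia.
Qed.

Lemma size_dmul A Q : A != 0 -> Q != 0 -> size (dmul A Q) = (size A + size Q).-1.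
Proof.
move=> A0 Q0; have sA_gt0 : (0 < size A)%N by rewrite size_poly_gt0.
have : A`_(size A).-1 != 0 by rewrite -lead_coefE lead_coef_eq0.
rewrite /Defs.dmul -(prednK sA_gt0) big_ord_recr /=; set d := (size A).-1 => lA0.
rewrite addrC size_polyDl size_scale // size_iter_dX ?addSn 1?addnC //.
apply: (big_ind (fun p => size p < d + size Q)%N).
- by rewrite size_poly0 addn_gt0 size_poly_gt0 Q0 orbT.
- by move=> p q ltp ltq; apply: leq_ltn_trans (size_polyD _ _) _; rewrite gtn_max ltp ltq.
move=> i _; apply: leq_ltn_trans (size_scale_leq _ _) _.
by apply: leq_ltn_trans (size_iter_dX_le _ _) _; have := ltn_ord i; lia.
Qed.

Lemma dmul_eq0 A Q : dmul A Q = 0 -> A = 0 \/ Q = 0.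
Proof.
move=> AQ0; have [->|A0] := eqVneq A 0; first by left.
have [->|Q0] := eqVneq Q 0; first by right.
have := size_dmul A0 Q0; rewrite AQ0 size_poly0.
by move: A0 Q0; rewrite -!size_poly_gt0; lia.
Qed.

Lemma dmul_relation_neq0 A B P L : A != 0 \/ B != 0 -> P != 0 -> L != 0 ->
  dmul A P + dmul B L = 0 -> A != 0 /\ B != 0.
Proof.
move=> AB0 P0 L0 rel; split; apply/eqP.
  move=> A0; move: rel; rewrite A0 dmul0l add0r => /dmul_eq0[B0|/eqP].
    by case: AB0; rewrite ?A0 ?B0 eqxx.
  by rewrite (negPf L0).
move=> B0; move: rel; rewrite B0 dmul0l addr0 => /dmul_eq0[A0|/eqP].
  by case: AB0; rewrite ?A0 ?B0 eqxx.
by rewrite (negPf P0).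
Qed.

Lemma right_division L P : L != 0 ->
  exists Q R, P = dmul Q L + R /\ (size R < size L)%N.
Proof.
move=> L0; have [N] := ubnP (size P); elim: N P => // N IH P /ltnSE leP.
have [ltPL|leLP] := ltnP (size P) (size L); first by exists 0, P; rewrite dmul0l add0r.
have P0 : P != 0 by rewrite -size_poly_gt0 (leq_trans _ leLP) // size_poly_gt0.
pose d := (size P - size L)%N; pose a := lead_coef P / lead_coef L.
have a0 : a != 0 by rewrite mulf_neq0 ?invr_eq0 ?lead_coef_eq0.
have ltPd : (size (P - a *: iter d dX L)%R < size P)%N.
  apply: size_sub_lead_lt => //.
    by rewrite size_scale // size_iter_dX // subnKC.
  by rewrite lead_coefZ lead_coef_iter_dX // divfK ?lead_coef_eq0.
have [Q [R [defP ltRL]]] := IH _ (leq_trans ltPd leP).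
by exists (Q + a *: 'X^d), R; rewrite dmulDl dmulZXn addrAC -defP subrK.
Qed.

(* Euclidean descent: dividing P by L turns the relation into one between L and the remainder. *)
Lemma common_rdivisor_of_relation P L A B :
  P != 0 -> L != 0 -> A != 0 \/ B != 0 ->
  (size A < size L)%N -> (size B < size P)%N -> dmul A P + dmul B L = 0 ->
  exists2 Q : {poly F}, (1 < size Q)%N & rdvd delta Q P /\ rdvd delta Q L.
Proof.
have [N] := ubnP (size P + size L)%N.
elim: N P L A B => // N IH P L A B /ltnSE leN P0 L0 AB0 ltAL ltBP rel.
wlog leLP : P L A B leN P0 L0 AB0 ltAL ltBP rel / (size L <= size P)%N.
  move=> sym; have [leLP|/ltnW lePL] := leqP (size L) (size P).
    exact: sym P L A B leN P0 L0 AB0 ltAL ltBP rel leLP.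
  have leN' : (size L + size P <= N)%N by rewrite addnC.
  have BA0 : B != 0 \/ A != 0 by case: AB0; [right | left].
  have rel' : dmul B L + dmul A P = 0 by rewrite addrC.
  by have [Q Q1 [QL QP]] := sym L P B A leN' L0 P0 BA0 ltBP ltAL rel' lePL; exists Q.
have [A0 _] := dmul_relation_neq0 AB0 P0 L0 rel.
have [Q0 [R [defP ltRL]]] := right_division P L0.
set C := dmul A Q0 + B.
have rel' : dmul A R + dmul C L = 0 by rewrite dmulDl dmulA addrA -dmulDr (addrC R) -defP.
have [R0|R0] := eqVneq R 0.
  exists L; first by apply: leq_trans ltAL; rewrite ltnS size_poly_gt0.
  by split; [exists Q0; rewrite defP R0 addr0 | exists 1; rewrite dmul1l].
have [_ C0] := dmul_relation_neq0 (or_introl A0) R0 L0 rel'.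
have ltN : (size R + size L < N)%N by apply: leq_trans leN; rewrite ltn_add2r (leq_trans ltRL).
have ltCR : (size C < size R)%N.
  move/eqP: (rel'); rewrite addr_eq0 => /eqP eqARCL.
  have := size_dmul A0 R0; rewrite eqARCL size_polyN size_dmul //.
  by move: A0 R0 L0; rewrite -!size_poly_gt0; lia.
have [G G1 [[R1 defR] [L1 defL]]] := IH R L A C ltN R0 L0 (or_introl A0) ltAL ltCR rel'.
exists G => //; split; last by exists L1.
by exists (dmul Q0 L1 + R1); rewrite dmulDl dmulA -defL -defR.
Qed.

Definition diff_sylvester A B l m N : 'M[F]_(l + m, N) :=
  col_mx (\matrix_(i < l, j < N) (iter i dX A)`_j)
         (\matrix_(i < m, j < N) (iter i dX B)`_j).

Lemma size_rVpoly l (u : 'rV[F]_l) : (size (rVpoly u) <= l)%N.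
Proof. exact: size_poly. Qed.

Lemma dmul_rVpoly l (u : 'rV[F]_l) A :
  dmul (rVpoly u) A = \sum_(i < l) u 0 i *: iter i dX A.
Proof.
by rewrite (dmulE _ (size_rVpoly u)); apply: eq_bigr => i _; rewrite coef_rVpoly_ord.
Qed.

Lemma diff_sylvester_mul A B l m N (u : 'rV[F]_l) (v : 'rV[F]_m) (j : 'I_N) :
  (row_mx u v *m diff_sylvester A B l m N) 0 j
  = (dmul (rVpoly u) A + dmul (rVpoly v) B)`_j.
Proof.
rewrite mul_row_col mxE coefD !dmul_rVpoly !coef_sum !mxE.
by congr (_ + _); apply: eq_bigr => i _; rewrite mxE coefZ.
Qed.

Lemma relation_of_sylvester_kernel A B l m N (w : 'rV[F]_(l + m)) :
  w != 0 -> w *m diff_sylvester A B l m N = 0 ->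
  ((size A + l).-1 <= N)%N -> ((size B + m).-1 <= N)%N ->
  exists U V, [/\ U != 0 \/ V != 0, (size U <= l)%N, (size V <= m)%N
                & dmul U A + dmul V B = 0].
Proof.
move=> w0 ker_w leA leB; exists (rVpoly (lsubmx w)), (rVpoly (rsubmx w)).
split; rewrite ?size_rVpoly //.
  have [Uw0|] := eqVneq (rVpoly (lsubmx w)) 0; last by left.
  right; apply: contraNneq w0 => Vw0; apply/eqP.
  by rewrite -[w]hsubmxK -[lsubmx w]rVpolyK -[rsubmx w]rVpolyK Uw0 Vw0 !linear0 row_mx0.
apply/polyP => j; rewrite coef0; have [ltjN|leNj] := ltnP j N.
  by rewrite -(diff_sylvester_mul _ _ _ _ (Ordinal ltjN)) hsubmxK ker_w mxE.
apply: nth_default; apply: leq_trans (size_polyD _ _) _; rewrite geq_max.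
apply/andP; split; apply: leq_trans (size_dmul_le _ _) _.
- by have := size_rVpoly (lsubmx w); lia.
- by have := size_rVpoly (rsubmx w); lia.
Qed.

Lemma sylvester_kernel_of_relation A B l m N U V :
  U != 0 \/ V != 0 -> (size U <= l)%N -> (size V <= m)%N ->
  dmul U A + dmul V B = 0 ->
  exists2 w : 'rV[F]_(l + m), w != 0 & w *m diff_sylvester A B l m N = 0.
Proof.
move=> UV0 leU leV rel; exists (row_mx (poly_rV U) (poly_rV V)).
  rewrite row_mx_eq0; rewrite -(poly_rV_K leU) -(poly_rV_K leV) in UV0.
  by case: UV0; apply: contra => /andP[/eqP U0 /eqP V0]; rewrite ?U0 ?V0 linear0.
by apply/rowP => j; rewrite diff_sylvester_mul (poly_rV_K leU) (poly_rV_K leV) rel coef0 mxE.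
Qed.

(* The cofactors of a common right divisor have a left common multiple: their
   Sylvester matrix has more rows than columns, so its kernel is nontrivial. *)
Lemma relation_of_common_rdivisor P L Q : P != 0 -> L != 0 -> (1 < size Q)%N ->
  rdvd delta Q P -> rdvd delta Q L ->
  exists U V, [/\ U != 0 \/ V != 0, (size U < size L)%N, (size V < size P)%N
                & dmul U P + dmul V L = 0].
Proof.
move=> P0 L0 Q1 [A defP] [B defL].
have Q0 : Q != 0 by rewrite -size_poly_gt0 ltnW.
have A0 : A != 0 by apply: contraNneq P0 => A0; rewrite defP A0 dmul0l.
have B0 : B != 0 by apply: contraNneq L0 => B0; rewrite defL B0 dmul0l.
pose T := diff_sylvester A B (size B) (size A) (size A + size B).-1.
have : ~~ row_free T.
  apply: contraL (rank_leq_col T) => /eqP->; rewrite -ltnNge.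
  by move: A0 B0; rewrite -!size_poly_gt0; lia.
rewrite -kermx_eq0 => /rowV0Pn[w /sub_kermxP ker_w w0].
have leBA : ((size B + size A).-1 <= (size A + size B).-1)%N by rewrite addnC.
have [U [V [UV0 leU leV rel]]] := relation_of_sylvester_kernel w0 ker_w (leqnn _) leBA.
exists U, V; split => //.
- by rewrite defL size_dmul //; move: A0 Q1; rewrite -size_poly_gt0; lia.
- by rewrite defP size_dmul //; move: B0 Q1; rewrite -size_poly_gt0; lia.
by rewrite defP defL -!dmulA -dmulDl rel dmul0l.
Qed.

Lemma gcrd_one_det P L l m : size P = m.+1 -> size L = l.+1 ->
  gcrd_one delta P L <-> \det (diff_sylvester P L l m (l + m)) != 0.
Proof.
move=> sP sL; have P0 : P != 0 by rewrite -size_poly_gt0 sP.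
have L0 : L != 0 by rewrite -size_poly_gt0 sL.
split=> [gcrd1|det0 Q QP QL].
  apply/negP => /det0P[w w0 ker_w].
  have lePN : ((size P + l).-1 <= l + m)%N by rewrite sP addSn addnC.
  have leLN : ((size L + m).-1 <= l + m)%N by rewrite sL.
  have [U [V [UV0 leU leV rel]]] := relation_of_sylvester_kernel w0 ker_w lePN leLN.
  rewrite -ltnS -sL in leU; rewrite -ltnS -sP in leV.
  have [Q Q1 [QP QL]] := common_rdivisor_of_relation P0 L0 UV0 leU leV rel.
  by have := gcrd1 Q QP QL; rewrite leqNgt Q1.
rewrite leqNgt; apply/negP => Q1.
have [U [V [UV0 ltU ltV rel]]] := relation_of_common_rdivisor P0 L0 Q1 QP QL.
rewrite sL ltnS in ltU; rewrite sP ltnS in ltV.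
have [w w0 ker_w] := @sylvester_kernel_of_relation P L l m (l + m) U V UV0 ltU ltV rel.
by move/negP: det0; apply; apply/det0P; exists w.
Qed.

End OreAlgebra.

Section FractionRepr.
Variable R : idomainType.
Implicit Types (a b c d : R) (f : {fraction R}).

Lemma repr_den_neq0 f : (repr f).2 != 0.
Proof. by case: (repr f). Qed.

Lemma fracE f : f = (repr f).1%:F / (repr f).2%:F.
Proof.
have d0F : (repr f).2%:F != 0 by rewrite tofrac_eq0 repr_den_neq0.
apply: (mulIf d0F); rewrite divfK //.
have fE : f = \pi_{fraction R} (repr f) by rewrite reprK.
move: (repr f) fE (repr_den_neq0 f) => x -> d0; unlock FracField.tofrac.
rewrite /GRing.mul /= !piE; apply/eqmodP.
by rewrite /= FracField.equivfE /= !numden_Ratio ?mulr1 ?oner_eq0 ?mul1r // mulrC.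
Qed.

Lemma tofrac_div_eq a b c d : b != 0 -> d != 0 ->
  a%:F / b%:F = c%:F / d%:F <-> a * d = c * b.
Proof.
move=> b0 d0; have b0F : b%:F != 0 by rewrite tofrac_eq0.
have d0F : d%:F != 0 by rewrite tofrac_eq0.
split=> [eq_ab | eq_ad]; last first.
  by apply: (mulIf b0F); apply: (mulIf d0F); rewrite divfK // mulrAC divfK // -!tofracM eq_ad.
apply/eqP; rewrite -tofrac_eq !tofracM; apply/eqP.
by rewrite -[a%:F](divfK b0F) eq_ab mulrAC divfK.
Qed.

End FractionRepr.

Section FractionDerivation.
Variable R : idomainType.
Implicit Types (a b c d p q : {poly R}) (x y : {fraction {poly R}}).

Lemma fderE p q : q != 0 -> fder (p%:F / q%:F) = (p^`() * q - p * q^`())%:F / (q ^+ 2)%:F.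
Proof.
move=> q0; rewrite /fder; move: (fracE (p%:F / q%:F)) (repr_den_neq0 (p%:F / q%:F)).
case: (repr _) => [[a b] /= _] pq b0; apply/tofrac_div_eq; rewrite ?expf_neq0 //.
have abpq : a * q = p * b by apply/tofrac_div_eq; rewrite -?pq.
have dabpq : a^`() * q + a * q^`() = p^`() * b + p * b^`() by rewrite -!derivM abpq.
apply/eqP; rewrite -subr_eq0.
have -> : (a^`() * b - a * b^`()) * q ^+ 2 - (p^`() * q - p * q^`()) * b ^+ 2 =
   b * q * ((a^`() * q + a * q^`()) - (p^`() * b + p * b^`()))
   - (b^`() * q + b * q^`()) * (a * q - p * b) by ring.
by rewrite dabpq abpq !subrr !mulr0 subrr.
Qed.

Lemma fderD x y : fder (x + y) = fder x + fder y.
Proof.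
rewrite [x]fracE [y]fracE; move: (repr_den_neq0 x) (repr_den_neq0 y).
case: (repr x) (repr y) => [[a b] /= _] [[c d] /= _] b0 d0.
have nz p : p != 0 -> p%:F != 0 by rewrite tofrac_eq0.
rewrite addf_div ?nz // -!tofracM -tofracD !fderE ?mulf_neq0 //.
rewrite addf_div ?nz ?expf_neq0 // -!tofracM -tofracD.
by apply/tofrac_div_eq; rewrite ?mulf_neq0 ?expf_neq0 // derivD !derivM; ring.
Qed.

Lemma fderM x y : fder (x * y) = fder x * y + x * fder y.
Proof.
rewrite [x]fracE [y]fracE; move: (repr_den_neq0 x) (repr_den_neq0 y).
case: (repr x) (repr y) => [[a b] /= _] [[c d] /= _] b0 d0.
have nz p : p != 0 -> p%:F != 0 by rewrite tofrac_eq0.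
rewrite mulf_div -!tofracM !fderE ?mulf_neq0 //.
rewrite !mulf_div -!tofracM addf_div ?nz ?mulf_neq0 ?expf_neq0 // -!tofracM -tofracD.
by apply/tofrac_div_eq; rewrite ?mulf_neq0 ?expf_neq0 // !derivM; ring.
Qed.

End FractionDerivation.

Section NonVanishing.
Variable k : fieldType.
Hypothesis k_char0 : [pchar k] =i pred0.

Lemma natr_inj : injective (fun i : nat => i%:R : k).
Proof.
have natr_eq0 := (pcharf0P k).1 k_char0.
move=> i j /= eq_ij; wlog le_ij : i j eq_ij / (i <= j)%N.
  by move=> sym; case: (leqP i j) => [/(sym i j eq_ij)|/ltnW/(sym j i (esym eq_ij))].
have : (j - i)%:R == 0 :> k by rewrite natrB // eq_ij subrr.
by rewrite natr_eq0 subn_eq0 => le_ji; apply/eqP; rewrite eqn_leq le_ij.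
Qed.

Lemma exists_nonroot (q : {poly k}) : q != 0 -> exists x, ~~ root q x.
Proof.
move=> q0; pose xs := [seq i%:R | i <- iota 0 (size q)] : seq k.
have xs_uniq : uniq xs by rewrite map_inj_uniq ?iota_uniq //; apply: natr_inj.
have [/(max_poly_roots q0)/(_ xs_uniq)|] := boolP (all (root q) xs).
  by rewrite size_map size_iota ltnn.
by case/allPn => x _ qx0; exists x.
Qed.

Section LastVariable.
Variable n : nat.
Implicit Types (p : {mpoly k[n.+1]}) (m : 'X_{1..n.+1}).

Local Notation widen := (widen_ord (leqnSn n)).

Definition snoc (T : Type) (f : 'I_n -> T) (a : T) (i : 'I_n.+1) : T :=
  if unlift ord_max i is Some j then f j else a.

Lemma snoc_widen (T : Type) (f : 'I_n -> T) a j : snoc f a (widen j) = f j.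
Proof.
by rewrite /snoc (_ : widen j = lift ord_max j) ?liftK //; apply: ord_inj; rewrite lift_max.
Qed.

Lemma snoc_max (T : Type) (f : 'I_n -> T) a : snoc f a ord_max = a.
Proof. by rewrite /snoc unlift_none. Qed.

Lemma eq_mnm_snoc m (m' : 'X_{1..n}) d :
  (m == [multinom snoc m' d i | i < n.+1]) =
  ([multinom m (widen i) | i < n] == m') && (m ord_max == d).
Proof.
apply/eqP/andP => [->|[/eqP <- /eqP <-]].
  by split; apply/eqP; [apply/mnmP => i; rewrite !mnmE snoc_widen | rewrite mnmE snoc_max].
apply/mnmP => i; rewrite mnmE; case: (unliftP ord_max i) => [j ->|->]; last by rewrite snoc_max.
by rewrite (_ : lift ord_max j = widen j) ?snoc_widen ?mnmE //; apply: ord_inj; rewrite lift_max.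
Qed.

Lemma coef_muni p d (m' : 'X_{1..n}) : ((muni p)`_d)@_m' = p@_[multinom snoc m' d i | i < n.+1].
Proof.
rewrite muniE coef_sum raddf_sum [in RHS](mpolyE p) raddf_sum; apply: eq_bigr => m _.
rewrite /= coefZ coefXn mcoeffZ mulr_natr mcoeffMn mcoeffZ !mcoeffX eq_mnm_snoc [d == _]eq_sym.
by case: eqP; case: eqP; rewrite ?mulr0 ?mulr1 ?mul0rn.
Qed.

Lemma muni_neq0 p : p != 0 -> muni p != 0.
Proof.
rewrite -msupp_eq0; case def_p: (msupp p) => [|m ms] // _.
have : p@_m != 0 by rewrite mcoeff_eq0 negbK def_p mem_head.
apply: contraNneq => up0.
have -> : m = [multinom snoc [multinom m (widen i) | i < n] (m ord_max) i | i < n.+1].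
  by apply/eqP; rewrite eq_mnm_snoc !eqxx.
by rewrite -coef_muni up0 coef0 mcoeff0.
Qed.

Lemma meval_muni p (v : 'I_n.+1 -> k) :
  p.@[v] = (map_poly (meval (fun i => v (widen i))) (muni p)).[v ord_max].
Proof.
rewrite mevalE muniE rmorph_sum horner_sum; apply: eq_bigr => m _ /=.
rewrite map_polyZ map_polyXn hornerZ hornerXn /= mevalZ mevalX big_ord_recr /= mulrA.
by congr (_ * _ * _); apply: eq_bigr => i _; rewrite mnmE.
Qed.

End LastVariable.

Lemma mpoly_nonvanishing n (p : {mpoly k[n]}) : p != 0 -> exists v, p.@[v] != 0.
Proof.
elim: n p => [|n IH] p p0.
  move: (nvar0_mpolyC_eq p erefl) p0 => ->; rewrite mpolyC_eq0 => p0.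
  by exists (fun=> 0); rewrite mevalC.
have [v' lead_v'] : exists v', (lead_coef (muni p)).@[v'] != 0.
  by apply: IH; rewrite lead_coef_eq0 muni_neq0.
pose g := map_poly (meval v') (muni p).
have [x gx0] : exists x, ~~ root g x.
  by apply: exists_nonroot; rewrite map_poly_eq0_id0 // muni_neq0.
exists (snoc v' x); rewrite meval_muni snoc_max.
have -> // : map_poly (meval (fun i => snoc v' x (widen_ord (leqnSn n) i))) (muni p) = g.
by apply: eq_map_poly => q; apply: meval_eq => i; rewrite snoc_widen.
Qed.

End NonVanishing.

Section Specialization.
Variables (k : fieldType) (n : nat) (r : {poly {mpoly k[n]}}).
Hypothesis r0 : r != 0.
Local Notation KX := {poly {mpoly k[n]}}.
Local Notation FK := {fraction {poly {mpoly k[n]}}}.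
Local Notation Fk := {fraction {poly k}}.
Local Notation E := (KX * nat * {poly k})%type.
Implicit Types (c : 'I_n -> k) (p q : {poly k}) (e : E).

HB.instance Definition _ c := GRing.RMorphism.copy (evalx c) (map_poly (meval c)).
HB.instance Definition _ := GRing.RMorphism.copy (liftkt n) (map_poly (@mpolyC n k)).

Lemma evalx_liftkt c q : evalx c (liftkt n q) = q.
Proof.
by apply/polyP => i; rewrite !coef_map_id0 ?mevalC ?meval0.
Qed.

Lemma liftkt_neq0 q : q != 0 -> liftkt n q != 0.
Proof. by apply: contraNneq => q0; rewrite -(evalx_liftkt (fun=> 0) q) q0 rmorph0. Qed.

Lemma den_neq0 m q : q != 0 -> r ^+ m * liftkt n q != 0.
Proof. by move=> q0; rewrite mulf_neq0 ?expf_neq0 ?liftkt_neq0. Qed.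

Lemma denM m1 q1 m2 q2 :
  (r ^+ m1 * liftkt n q1) * (r ^+ m2 * liftkt n q2) = r ^+ (m1 + m2) * liftkt n (q1 * q2).
Proof. by rewrite mulrACA -exprD -rmorphM. Qed.

Lemma evalx_den c m q : evalx c (r ^+ m * liftkt n q) = evalx c r ^+ m * q.
Proof. by rewrite rmorphM rmorphXn /= evalx_liftkt. Qed.

Lemma evalx_deriv c (p : KX) : evalx c p^`() = (evalx c p)^`().
Proof. by rewrite /evalx deriv_map. Qed.

Lemma kt_to_K_div p q : q != 0 -> kt_to_K n (p%:F / q%:F) = (liftkt n p)%:F / (liftkt n q)%:F.
Proof.
move=> q0; rewrite /kt_to_K; move: (fracE (p%:F / q%:F)) (repr_den_neq0 (p%:F / q%:F)).
case: (repr _) => [[a b] /= _] pq b0; apply/tofrac_div_eq; rewrite ?liftkt_neq0 //.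
by rewrite -!rmorphM; congr (liftkt n _); apply/tofrac_div_eq; rewrite -?pq.
Qed.

Lemma kt_to_K0 : kt_to_K n (0 : Fk) = 0.
Proof. by have := kt_to_K_div 0 (oner_neq0 _); rewrite !rmorph0 !mul0r. Qed.

Lemma kt_to_K1 : kt_to_K n (1 : Fk) = 1.
Proof. by have := kt_to_K_div 1 (oner_neq0 _); rewrite !rmorph1 !divr1. Qed.

Section AtPoint.
Variable c : 'I_n -> k.
Hypothesis rc0 : evalx c r != 0.

Lemma evalx_den_neq0 m q : q != 0 -> evalx c (r ^+ m * liftkt n q) != 0.
Proof. by move=> q0; rewrite evalx_den mulf_neq0 ?expf_neq0. Qed.

Lemma coefKtE e : coefKt r c e = (evalx c e.1.1)%:F / (evalx c (r ^+ e.1.2 * liftkt n e.2))%:F.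
Proof. by rewrite evalx_den. Qed.

Lemma coefKt_congr e1 e2 : e1.2 != 0 -> e2.2 != 0 ->
  coefK r e1 = coefK r e2 -> coefKt r c e1 = coefKt r c e2.
Proof.
move=> e10 e20 /(tofrac_div_eq _ _ (den_neq0 _ e10) (den_neq0 _ e20)) /(congr1 (evalx c)).
by rewrite !coefKtE => eq12; apply/tofrac_div_eq; rewrite ?evalx_den_neq0 // -!rmorphM /= eq12.
Qed.

Lemma coefK_eq0 e : e.2 != 0 -> (coefK r e == 0) = (e.1.1 == 0).
Proof. by move=> e0; rewrite /coefK mulf_eq0 invr_eq0 !tofrac_eq0 (negPf (den_neq0 _ e0)) orbF. Qed.

Lemma coefKt_eq0 e : e.2 != 0 -> (coefKt r c e == 0) = (evalx c e.1.1 == 0).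
Proof.
by move=> e0; rewrite coefKtE mulf_eq0 invr_eq0 !tofrac_eq0 (negPf (evalx_den_neq0 _ e0)) orbF.
Qed.

(* [z] lies in k(t)[x, 1/r] and [w] is its value at x = c; a relation rather than a map,
   since the representation p / (r^m q) is not unique. *)
Definition specializes (z : FK) (w : Fk) : Prop :=
  exists e, [/\ e.2 != 0, z = coefK r e & w = coefKt r c e].

Lemma specializes_coefK e : e.2 != 0 -> specializes (coefK r e) (coefKt r c e).
Proof. by move=> e0; exists e. Qed.

Lemma specializes_fun z w1 w2 : specializes z w1 -> specializes z w2 -> w1 = w2.
Proof. by move=> [e1 [e10 -> ->]] [e2 [e20 eq12 ->]]; apply: coefKt_congr. Qed.

Lemma specializes0 : specializes 0 0.
Proof.
exists (0, 0%N, 1); split; rewrite ?oner_eq0 //.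
  by rewrite /coefK tofrac0 mul0r.
by rewrite /coefKt rmorph0 tofrac0 mul0r.
Qed.

Lemma specializes1 : specializes 1 1.
Proof.
exists (1, 0%N, 1); split; rewrite ?oner_eq0 //.
  by rewrite /coefK /= expr0 mul1r !rmorph1 divr1.
by rewrite /coefKt /= expr0 mulr1 !rmorph1 divr1.
Qed.

Lemma specializes_neq0 z w : specializes z w -> w != 0 -> z != 0.
Proof.
move=> zw; apply: contraNneq => z0; apply/eqP/(specializes_fun zw).
by rewrite z0; apply: specializes0.
Qed.

Lemma specializes_div a m q : q != 0 ->
  specializes (a%:F / (r ^+ m * liftkt n q)%:F)
              ((evalx c a)%:F / (evalx c (r ^+ m * liftkt n q))%:F).
Proof. by move=> q0; exists (a, m, q); rewrite coefKtE. Qed.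

Lemma specializesD z1 w1 z2 w2 :
  specializes z1 w1 -> specializes z2 w2 -> specializes (z1 + z2) (w1 + w2).
Proof.
move=> [[[a1 m1] q1] [/= q10 -> ->]] [[[a2 m2] q2] [/= q20 -> ->]].
rewrite !coefKtE /coefK /= !addf_div ?tofrac_eq0 ?den_neq0 ?evalx_den_neq0 //.
rewrite -!rmorphM -!rmorphD denM; apply: specializes_div; exact: mulf_neq0.
Qed.

Lemma specializesM z1 w1 z2 w2 :
  specializes z1 w1 -> specializes z2 w2 -> specializes (z1 * z2) (w1 * w2).
Proof.
move=> [[[a1 m1] q1] [/= q10 -> ->]] [[[a2 m2] q2] [/= q20 -> ->]].
rewrite !coefKtE /coefK /= !mulf_div -!rmorphM denM; apply: specializes_div; exact: mulf_neq0.
Qed.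

Lemma specializesN z w : specializes z w -> specializes (- z) (- w).
Proof.
move=> [[[a m] q] [/= q0 -> ->]].
by rewrite coefKtE /coefK /= -!mulNr -!rmorphN; apply: specializes_div.
Qed.

Lemma specializes_fder z w : specializes z w -> specializes (fder z) (fder w).
Proof.
move=> [[[a m] q] [/= q0 -> ->]]; rewrite coefKtE /coefK /=.
rewrite !fderE ?den_neq0 ?evalx_den_neq0 // -!evalx_deriv -!rmorphM -!rmorphB.
by rewrite -!rmorphXn !expr2 denM; apply: specializes_div; rewrite mulf_neq0.
Qed.

Lemma specializes_kt_to_K f : specializes (kt_to_K n f) f.
Proof.
have := specializes_div (liftkt n (repr f).1) 0 (repr_den_neq0 f).
by rewrite evalx_den evalx_liftkt !expr0 !mul1r -fracE.
Qed.

Definition pspecializes (X : {poly FK}) (Y : {poly Fk}) : Prop :=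
  forall j, specializes X`_j Y`_j.

Lemma pspecializes_dX X Y :
  pspecializes X Y -> pspecializes (dX (@fder _) X) (dX (@fder _) Y).
Proof.
move=> XY j; rewrite !(coef_dX (@fderD _)); apply: specializesD; last exact/specializes_fder/XY.
by case: (j == 0%N); [apply: specializes0 | apply: XY].
Qed.

Lemma pspecializes_iter_dX i X Y :
  pspecializes X Y -> pspecializes (iter i (dX (@fder _)) X) (iter i (dX (@fder _)) Y).
Proof. by move=> XY; elim: i => //= i; apply: pspecializes_dX. Qed.

Lemma pspecializes_opK s : all (fun e => e.2 != 0) s -> pspecializes (opK r s) (opKt r c s).
Proof.
move=> s0 j; rewrite !coef_Poly; have [ltjs|lesj] := ltnP j (size s).
  rewrite !(nth_map (0, 0%N, 1)) //.
  exact/specializes_coefK/(allP s0)/mem_nth.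
by rewrite !nth_default ?size_map //; apply: specializes0.
Qed.

Lemma pspecializes_kt_to_K L : pspecializes (map_poly (kt_to_K n) L) L.
Proof. by move=> j; rewrite coef_map_id0 ?kt_to_K0 //; apply: specializes_kt_to_K. Qed.

Lemma size_pspecializes X Y : X \is monic -> pspecializes X Y -> size Y = size X.
Proof.
move=> Xm XY; have X0 : (0 < size X)%N by rewrite size_poly_gt0 monic_neq0.
apply/eqP; rewrite eqn_leq; apply/andP; split.
  apply/leq_sizeP => j leXj; apply: (specializes_fun (XY j)).
  by rewrite nth_default //; apply: specializes0.
have lead1 : Y`_(size X).-1 = 1.
  by apply: (specializes_fun (XY _)); rewrite -lead_coefE (monicP Xm); apply: specializes1.
rewrite -(prednK X0) ltnNge; apply/negP => leYX.
by move: lead1; rewrite nth_default // => /eqP; rewrite eq_sym oner_eq0.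
Qed.

Lemma specializes_det N (M1 : 'M[FK]_N) (M2 : 'M[Fk]_N) :
  (forall i j, specializes (M1 i j) (M2 i j)) -> specializes (\det M1) (\det M2).
Proof.
move=> M12; rewrite /determinant.
apply: (big_ind2 specializes); [exact: specializes0 | exact: specializesD |].
move=> p _; apply: specializesM; last first.
  by apply: (big_ind2 specializes); [exact: specializes1 | exact: specializesM |].
by case: (perm.odd_perm p); [apply/specializesN/specializes1 | apply: specializes1].
Qed.

Lemma specializes_det_diff_sylvester X Y X' Y' l m :
  pspecializes X Y -> pspecializes X' Y' ->
  specializes (\det (diff_sylvester (@fder _) X X' l m (l + m)))
              (\det (diff_sylvester (@fder _) Y Y' l m (l + m))).
Proof.
move=> XY XY'; apply: specializes_det => i j.
by case: (split_ordP i) => i' ->; rewrite ?col_mxEu ?col_mxEd !mxE; apply: pspecializes_iter_dX.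
Qed.

End AtPoint.
End Specialization.

Lemma evalx_nonvanishing (k : fieldType) n (f : {poly {mpoly k[n]}}) :
  [pchar k] =i pred0 -> f != 0 -> exists a, evalx a f != 0.
Proof.
move=> k_char0 f0; have [|a lead_a] := mpoly_nonvanishing k_char0 (p := lead_coef f).
  by rewrite lead_coef_eq0.
by exists a; rewrite /evalx map_poly_eq0_id0.
Qed.

Section GcrdSpecialization.
Variables (k : fieldType) (n : nat) (r : {poly {mpoly k[n]}}).
Variables (s : seq ({poly {mpoly k[n]}} * nat * {poly k})) (L : {poly {fraction {poly k}}}).
Hypotheses (r0 : r != 0) (s0 : all (fun e => e.2 != 0) s).
Hypotheses (P_monic : opK r s \is monic) (L_monic : L \is monic).

Let P := opK r s.
Let LK := map_poly (kt_to_K n) L.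
Let m := (size P).-1.
Let l := (size L).-1.
Local Notation sylvester_det X Y := (\det (diff_sylvester (@fder _) X Y l m (l + m))).

Let size_P : size P = m.+1.
Proof. by rewrite prednK // size_poly_gt0 monic_neq0. Qed.

Let size_L : size L = l.+1.
Proof. by rewrite prednK // size_poly_gt0 monic_neq0. Qed.

Lemma gcrd_one_K_det : gcrd_one (@fder _) P LK <-> sylvester_det P LK != 0.
Proof.
apply: gcrd_one_det; [exact: fderD | exact: fderM | exact: size_P |].
by rewrite size_map_poly_id0 ?size_L // (monicP L_monic) kt_to_K1 oner_neq0.
Qed.

Lemma gcrd_one_specialized_det a : evalx a r != 0 ->
  gcrd_one (@fder _) (opKt r a s) L <-> sylvester_det (opKt r a s) L != 0.
Proof.
move=> ra0; apply: gcrd_one_det; [exact: fderD | exact: fderM | | exact: size_L].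
by rewrite (size_pspecializes r0 ra0 P_monic (pspecializes_opK r a s0)) size_P.
Qed.

Lemma specializes_sylvester_det a : evalx a r != 0 ->
  specializes r a (sylvester_det P LK) (sylvester_det (opKt r a s) L).
Proof.
move=> ra0; apply: specializes_det_diff_sylvester => //.
  exact: pspecializes_opK.
exact: pspecializes_kt_to_K.
Qed.

Lemma gcrd_one_lift c : evalx c r != 0 ->
  gcrd_one (@fder _) (opKt r c s) L -> gcrd_one (@fder _) P LK.
Proof.
move=> rc0 /(gcrd_one_specialized_det rc0) det_c0; apply/gcrd_one_K_det.
exact: specializes_neq0 (specializes_sylvester_det rc0) det_c0.
Qed.

Lemma gcrd_one_specialize c : [pchar k] =i pred0 -> evalx c r != 0 ->
  gcrd_one (@fder _) P LK ->
  exists a, evalx a r != 0 /\ gcrd_one (@fder _) (opKt r a s) L.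
Proof.
move=> k_char0 rc0 /gcrd_one_K_det detK0.
have [e [e0 detKE _]] := specializes_sylvester_det rc0.
have p0 : e.1.1 != 0 by rewrite -(coefK_eq0 r0 e0) -detKE.
have [a] := evalx_nonvanishing k_char0 (mulf_neq0 r0 p0).
rewrite rmorphM mulf_eq0 negb_or => /andP[ra0 pa0].
exists a; split=> //; apply/(gcrd_one_specialized_det ra0).
have sa := specializes_sylvester_det ra0; rewrite detKE in sa.
by rewrite -(specializes_fun r0 ra0 (specializes_coefK r a e0) sa) (coefKt_eq0 ra0 e0).
Qed.

End GcrdSpecialization.

Theorem mainTheorem11 (k : closedFieldType) (n : nat)
  (hchar : [pchar k] =i pred0)
  (r : {poly {mpoly k[n]}})
  (s : seq ({poly {mpoly k[n]}} * nat * {poly k}))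
  (L : {poly {fraction {poly k}}})
  (c : 'I_n -> k) :
  r != 0 ->
  all (fun e => e.2 != 0) s ->
  opK r s \is monic ->
  L \is monic ->
  evalx c r != 0 ->
  (gcrd_one (@fder k) (opKt r c s) L ->
     gcrd_one (@fder {mpoly k[n]}) (opK r s) (map_poly (@kt_to_K k n) L))
  /\
  (gcrd_one (@fder {mpoly k[n]}) (opK r s) (map_poly (@kt_to_K k n) L) ->
     exists a : 'I_n -> k, evalx a r != 0 /\
       gcrd_one (@fder k) (opKt r a s) L).
Proof.
move=> r0 s0 P_monic L_monic rc0; split.
  exact: (gcrd_one_lift r0 s0 P_monic L_monic rc0).
exact: (gcrd_one_specialize r0 s0 P_monic L_monic hchar rc0).
Qed.
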